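(* Let $\mathcal{S}$ be an inverse semigroupoid. The following are equivalent: (i) $\mathcal{S}$ is $E$-unitary, i.e. $\sigma$ is idempotent pure; (ii) the canonical quotient map $\pi_\sigma:\mathcal{S}\to\mathcal{S}/\sigma$ is idempotent pure, i.e. $\pi_\sigma^{-1}(E(\mathcal{S}/\sigma))\subseteq E(\mathcal{S})$; (iii) if $(s,t)\in\sigma$, then $s^*t\in E(\mathcal{S})$ and $st^*\in E(\mathcal{S})$; (iv) for all $s,t\in\mathcal{S}$, $(s,t)\in\sigma$ if and only if $s^*t\in E(\mathcal{S})$ and $st^*\in E(\mathcal{S})$; (v) if $s\in\mathcal{S}$, $e\in E(\mathcal{S})$ and $e\leqslant s$, then $s\in E(\mathcal{S})$.
   Context: A semigroupoid consists of a set $\mathcal{S}$ of arrows, a set $\mathcal{S}^{(0)}$ of objects, maps $d,c:\mathcal{S}\to\mathcal{S}^{(0)}$, composable pairs $\mathcal{S}^{(2)}=\{(s,t): d(s)=c(t)\}$ and an associative multiplication on $\mathcal{S}^{(2)}$ with $d(st)=d(t)$, $c(st)=c(s)$. It is an inverse semigroupoid if each $s$ has a unique $s^*$ with $(s,s^* ),(s^*,s)\in\mathcal{S}^{(2)}$, $ss^*s=s$, $s^*ss^*=s^*$. $E(\mathcal{S})$ is the set of idempotents. Natural partial order: for parallel $s,t$ (same domain and codomain), $s\leqslant t$ iff $s=te$ for some $e\in E(\mathcal{S})$ with $(t,e)\in\mathcal{S}^{(2)}$. $(s,t)\in\sigma$ iff there is $r$ with $r\leqslant s$ and $r\leqslant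 t$; $\sigma$ is a congruence and the quotient $\mathcal{S}/\sigma$ (arrows the $\sigma$-classes, objects $\mathcal{S}^{(0)}$, $d(\pi_\sigma(s))=d(s)$, $c(\pi_\sigma(s))=c(s)$, $\pi_\sigma(s)\pi_\sigma(t)=\pi_\sigma(st)$) is a groupoid. A congruence $R$ is idempotent pure if $(s,e)\in R$ and $e\in E(\mathcal{S})$ imply $s\in E(\mathcal{S})$. $\mathcal{S}$ is called $E$-unitary if $\sigma$ is idempotent pure. *)

(* The multiplication is given as a total function
   [mul : arr -> arr -> arr], but only its values on composable pairs
   (d s = c t) carry meaning; all axioms are restricted to S^(2). *)
Record semigroupoid := {
  arr : Type;
  obj : Type;
  dom : arr -> obj;
  cod : arr -> obj;
  mul : arr -> arr -> arr;
  dom_mul : forall s t, dom s = cod t -> dom (mul s t) = dom t;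
  cod_mul : forall s t, dom s = cod t -> cod (mul s t) = cod s;
  mul_assoc : forall r s t, dom r = cod s -> dom s = cod t ->
                mul (mul r s) t = mul r (mul s t)
}.

Section Defs.
Variable S : semigroupoid.

Definition composable (s t : arr S) : Prop := dom S s = cod S t.

Definition is_inverse (s s' : arr S) : Prop :=
  composable s s' /\ composable s' s /\
  mul S (mul S s s') s = s /\ mul S (mul S s' s) s' = s'.

Definition idem (e : arr S) : Prop := composable e e /\ mul S e e = e.

Definition nat_le (s t : arr S) : Prop :=
  dom S s = dom S t /\ cod S s = cod S t /\
  exists e, idem e /\ composable t e /\ s = mul S t e.

Definition sigma (s t : arr S) : Prop := exists r, nat_le r s /\ nat_le r t.

Definition idempotent_pure (R : arr S -> arr S -> Prop) : Prop :=
  forall s e, R s e -> idem e -> idem s.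

Definition E_unitary : Prop := idempotent_pure sigma.

(* The quotient S/sigma: arrows are sigma-classes pi_sigma s (as sets),
   d(pi s) = d s, c(pi s) = c s, pi s * pi t = pi (s t).  Hence
   pi_sigma s is an idempotent of S/sigma iff (pi s, pi s) is composable
   (d s = c s) and pi s * pi s = pi s, i.e. pi (s s) = pi s. *)
Definition pi_sigma (s : arr S) : arr S -> Prop := sigma s.

Definition quot_idem_of (s : arr S) : Prop :=
  dom S s = cod S s /\ pi_sigma (mul S s s) = pi_sigma s.

Definition pi_sigma_idempotent_pure : Prop :=
  forall s, quot_idem_of s -> idem s.

End Defs.

Record inverse_semigroupoid := {
  isg :> semigroupoid;
  star : arr isg -> arr isg;
  star_inverse : forall s, is_inverse isg s (star s);
  star_unique : forall s s', is_inverse isg s s' -> s' = star s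
}.

From Stdlib Require Import FunctionalExtensionality PropExtensionality.

(* sigma is an equivalence compatible with multiplication on both sides, and
   any two idempotents at the same object are sigma-related.  Each of (ii),
   (iii) and (v) is then reduced to (i) by multiplying a sigma-related pair by
   s, s^* or t^* and comparing with the idempotents s^* s, s s^* and t t^*;
   the reverse implication in (iv) holds in every inverse semigroupoid. *)

Section InverseSemigroupoid.
Variable S : inverse_semigroupoid.

Local Notation "s ⋅ t" := (mul S s t) (at level 40, left associativity).
Local Notation "s ^*" := (star S s) (at level 2, left associativity, format "s ^*").
Local Notation dom := (dom S).
Local Notation cod := (cod S).
Local Notation idem := (idem S).
Local Notation nat_le := (nat_le S).
Local Notation sigma := (sigma S).

Lemma dom_star s : dom s^* = cod s.
Proof. apply (star_inverse S s). Qed.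

Lemma cod_star s : cod s^* = dom s.
Proof. symmetry; apply (star_inverse S s). Qed.

(* [mul] is total, so every use of [mul_assoc] leaves composability side
   goals; these are closed by computing domains and codomains. *)
Ltac domcod := unfold composable in *;
  repeat first [ rewrite dom_star | rewrite cod_star
  | (rewrite dom_mul; [| solve [domcod]]) | (rewrite cod_mul; [| solve [domcod]]) ];
  try congruence.
Ltac reassoc := repeat (rewrite mul_assoc; [| solve [domcod] | solve [domcod]]).
Ltac reassoc_in H := repeat (rewrite mul_assoc in H; [| solve [domcod] | solve [domcod]]).

Lemma mul_star_mul s : s ⋅ (s^* ⋅ s) = s.
Proof.
  destruct (star_inverse S s) as [H1 [H2 [H3 _]]].
  rewrite <- mul_assoc; auto.
Qed.

Lemma star_mul_star s : s^* ⋅ (s ⋅ s^*) = s^*.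
Proof.
  destruct (star_inverse S s) as [H1 [H2 [_ H4]]].
  rewrite <- mul_assoc; auto.
Qed.

Lemma mul_star_mul_l s u : dom s = cod u -> s ⋅ (s^* ⋅ (s ⋅ u)) = s ⋅ u.
Proof.
  intro Hsu. rewrite <- (mul_assoc _ s^*), <- mul_assoc by domcod.
  now rewrite mul_star_mul.
Qed.

Lemma star_mul_star_l s u : cod s = cod u -> s^* ⋅ (s ⋅ (s^* ⋅ u)) = s^* ⋅ u.
Proof.
  intro Hsu. rewrite <- (mul_assoc _ s), <- mul_assoc by domcod.
  now rewrite star_mul_star.
Qed.

Lemma star_idem e : idem e -> e^* = e.
Proof.
  intros [He1 He2]. symmetry; apply star_unique.
  unfold is_inverse. rewrite !He2. auto.
Qed.

Lemma star_involutive s : s^*^* = s.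
Proof.
  symmetry; apply star_unique.
  destruct (star_inverse S s) as [H1 [H2 [H3 H4]]]. repeat split; auto.
Qed.

Lemma idem_star_mul s : idem (s^* ⋅ s).
Proof. split; [domcod|]. reassoc. now rewrite mul_star_mul. Qed.

Lemma idem_mul_star s : idem (s ⋅ s^*).
Proof. split; [domcod|]. reassoc. now rewrite star_mul_star. Qed.

Lemma idem_absorb e t : idem e -> dom e = cod t -> e ⋅ (e ⋅ t) = e ⋅ t.
Proof. intros [He1 He2] Het. rewrite <- mul_assoc by auto. now rewrite He2. Qed.

Lemma star_mul_idem e f : idem e -> idem f -> dom e = cod f ->
  (e ⋅ f)^* = f ⋅ ((e ⋅ f)^* ⋅ e).
Proof.
  intros He Hf Hef. pose proof He as [He1 _]. pose proof Hf as [Hf1 _].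
  pose proof (mul_star_mul (e ⋅ f)) as Hx. pose proof (star_mul_star (e ⋅ f)) as Hy.
  reassoc_in Hx. reassoc_in Hy.
  symmetry; apply star_unique. repeat split; try domcod.
  - reassoc. rewrite (idem_absorb f), (idem_absorb e) by (auto; domcod). exact Hx.
  - reassoc. rewrite (idem_absorb e), (idem_absorb f) by (auto; domcod).
    apply (f_equal (fun a => a ⋅ e)) in Hy. reassoc_in Hy. now rewrite Hy.
Qed.

(* The inverse y of e f satisfies y = f y e, hence y y = f (y e f y) e = y. *)
Lemma idem_mul e f : idem e -> idem f -> dom e = cod f -> idem (e ⋅ f).
Proof.
  intros He Hf Hef. pose proof He as [He1 _]. pose proof Hf as [Hf1 _].
  assert (Hy : idem (e ⋅ f)^*).
  { split; [domcod|].
    pose proof (star_mul_star (e ⋅ f)) as H.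
    apply (f_equal (fun a => a ⋅ e)) in H. reassoc_in H.
    rewrite (star_mul_idem e f) by auto. reassoc. now rewrite H. }
  rewrite <- (star_involutive (e ⋅ f)). now rewrite star_idem.
Qed.

Lemma idem_mulC e f : idem e -> idem f -> dom e = cod f -> e ⋅ f = f ⋅ e.
Proof.
  intros He Hf Hef. pose proof He as [He1 _]. pose proof Hf as [Hf1 _].
  assert (Hfe : idem (f ⋅ e)) by (apply idem_mul; auto; domcod).
  destruct (idem_mul e f He Hf Hef) as [_ Hx].
  rewrite <- (star_idem _ Hfe). apply star_unique.
  destruct Hfe as [_ Hy]. reassoc_in Hx. reassoc_in Hy.
  repeat split; try domcod.
  - reassoc. rewrite (idem_absorb e), (idem_absorb f) by (auto; domcod). exact Hy.
  - reassoc. rewrite (idem_absorb f), (idem_absorb e) by (auto; domcod). exact Hx.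
Qed.

Lemma star_mul s t : dom s = cod t -> (s ⋅ t)^* = t^* ⋅ s^*.
Proof.
  intro Hst. symmetry; apply star_unique.
  assert (Hc : t ⋅ t^* ⋅ (s^* ⋅ s) = s^* ⋅ s ⋅ (t ⋅ t^*))
    by (apply idem_mulC; [apply idem_mul_star | apply idem_star_mul | domcod]).
  repeat split; try domcod.
  - apply (f_equal (fun a => s ⋅ (a ⋅ t))) in Hc. reassoc_in Hc.
    reassoc. rewrite Hc, mul_star_mul, mul_star_mul_l; auto.
  - apply (f_equal (fun a => t^* ⋅ (a ⋅ s^*))) in Hc. reassoc_in Hc.
    reassoc. rewrite <- Hc, star_mul_star, star_mul_star_l; domcod.
Qed.

Lemma mul_idem_conj e s : idem e -> dom e = cod s -> e ⋅ s = s ⋅ (s^* ⋅ (e ⋅ s)).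
Proof.
  intros He Hes. pose proof He as [He1 _].
  assert (Hc : e ⋅ (s ⋅ s^*) = s ⋅ s^* ⋅ e)
    by (apply idem_mulC; [exact He | apply idem_mul_star | domcod]).
  apply (f_equal (fun a => a ⋅ s)) in Hc. reassoc_in Hc.
  rewrite mul_star_mul in Hc. exact Hc.
Qed.

Lemma idem_conj e s : idem e -> dom e = cod s -> idem (s^* ⋅ (e ⋅ s)).
Proof.
  intros He Hes. pose proof He as [He1 _]. split; [domcod|].
  reassoc. now rewrite <- mul_idem_conj, idem_absorb by auto.
Qed.

Lemma nat_le_refl s : nat_le s s.
Proof.
  repeat split. exists (s^* ⋅ s).
  split; [apply idem_star_mul | split; [domcod | symmetry; apply mul_star_mul]].
Qed.

Lemma nat_le_mul_idem s e : idem e -> dom s = cod e -> nat_le (s ⋅ e) s.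
Proof.
  intros He Hse. pose proof He as [He1 _].
  repeat split; try domcod. now exists e.
Qed.

Lemma nat_le_trans r s t : nat_le r s -> nat_le s t -> nat_le r t.
Proof.
  intros [Hd1 [Hc1 [e [He [Hse Hr]]]]] [Hd2 [Hc2 [f [Hf [Htf Hs]]]]].
  pose proof He as [He1 _]. pose proof Hf as [Hf1 _]. unfold composable in *.
  assert (Hfe : dom f = cod e) by (subst s; rewrite dom_mul in Hse; auto).
  repeat split; try congruence.
  exists (f ⋅ e). repeat split.
  - apply idem_mul; auto.
  - apply idem_mul; auto.
  - domcod.
  - subst r s. apply mul_assoc; auto.
Qed.

Lemma nat_le_mull s r t : nat_le r t -> dom s = cod t -> nat_le (s ⋅ r) (s ⋅ t).
Proof.
  intros [Hd [Hc [e [He [Hte Hr]]]]] Hst. unfold composable in *.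
  repeat split; try domcod.
  exists e. repeat split; try apply He; [domcod|].
  subst r. symmetry; apply mul_assoc; auto.
Qed.

Lemma nat_le_mulr r s u : nat_le r s -> dom s = cod u -> nat_le (r ⋅ u) (s ⋅ u).
Proof.
  intros [Hd [Hc [e [He [Hse Hr]]]]] Hsu. pose proof He as [He1 _].
  unfold composable in *.
  repeat split; try domcod.
  exists (u^* ⋅ (e ⋅ u)). repeat split; try apply idem_conj; try domcod.
  subst r. reassoc. now rewrite <- mul_idem_conj by (auto; domcod).
Qed.

Lemma nat_le_idem r e : idem e -> nat_le r e -> idem r.
Proof.
  intros He [_ [_ [f [Hf [Hef Hr]]]]]. subst r. now apply idem_mul.
Qed.

Lemma sigma_of_le r s : nat_le r s -> sigma r s.
Proof. intro H. exists r. split; [apply nat_le_refl | exact H]. Qed.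

Lemma sigma_refl s : sigma s s.
Proof. apply sigma_of_le, nat_le_refl. Qed.

Lemma sigma_sym s t : sigma s t -> sigma t s.
Proof. intros [r [H1 H2]]. now exists r. Qed.

Lemma sigma_trans s t u : sigma s t -> sigma t u -> sigma s u.
Proof.
  intros [r1 [H1 H2]] [r2 [H3 H4]].
  destruct H2 as [Hd1 [Hc1 [e1 [He1 [Hte1 Hr1]]]]].
  destruct H3 as [Hd2 [Hc2 [e2 [He2 [Hte2 Hr2]]]]].
  pose proof He1 as [He11 _]. pose proof He2 as [He21 _]. unfold composable in *.
  assert (Hc : e1 ⋅ e2 = e2 ⋅ e1) by (apply idem_mulC; auto; congruence).
  exists (r1 ⋅ e2). split.
  - apply nat_le_trans with r1; auto. apply nat_le_mul_idem; auto. subst r1; domcod.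
  - apply nat_le_trans with r2; auto.
    assert (Hr : r1 ⋅ e2 = r2 ⋅ e1)
      by (subst r1 r2; rewrite !mul_assoc by congruence; now rewrite Hc).
    rewrite Hr. apply nat_le_mul_idem; auto. subst r2; domcod.
Qed.

Lemma sigma_dom s t : sigma s t -> dom s = dom t.
Proof. intros [r [[H1 _] [H2 _]]]. congruence. Qed.

Lemma sigma_cod s t : sigma s t -> cod s = cod t.
Proof. intros [r [[_ [H1 _]] [_ [H2 _]]]]. congruence. Qed.

Lemma sigma_mull s t t' : sigma t t' -> dom s = cod t -> sigma (s ⋅ t) (s ⋅ t').
Proof.
  intros Ht Hst. destruct Ht as [r [H1 H2]].
  exists (s ⋅ r). split; apply nat_le_mull; auto.
  rewrite Hst. apply (sigma_cod t t'). now exists r.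
Qed.

Lemma sigma_mulr s s' u : sigma s s' -> dom s = cod u -> sigma (s ⋅ u) (s' ⋅ u).
Proof.
  intros Hs Hsu. destruct Hs as [r [H1 H2]].
  exists (r ⋅ u). split; apply nat_le_mulr; auto.
  rewrite <- Hsu. symmetry. apply (sigma_dom s s'). now exists r.
Qed.

Lemma sigma_mul s s' t t' :
  sigma s s' -> sigma t t' -> dom s = cod t -> sigma (s ⋅ t) (s' ⋅ t').
Proof.
  intros Hs Ht Hst. apply sigma_trans with (s' ⋅ t).
  - now apply sigma_mulr.
  - apply sigma_mull; auto. now rewrite <- (sigma_dom s s').
Qed.

Lemma sigma_idem e f : idem e -> idem f -> dom e = dom f -> sigma e f.
Proof.
  intros He Hf Hef. pose proof He as [He1 _]. pose proof Hf as [Hf1 _].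
  unfold composable in *. exists (e ⋅ f). split.
  - apply nat_le_mul_idem; auto; congruence.
  - rewrite idem_mulC by (auto; congruence). apply nat_le_mul_idem; auto; congruence.
Qed.

(* Witness: s (s^* t) lies below s and, being equal to t (s^* s), below t. *)
Lemma sigma_of_idem_star_mul s t :
  idem (s^* ⋅ t) -> idem (s ⋅ t^*) -> composable S s^* t -> sigma s t.
Proof.
  intros H1 H2 Hst. pose proof H1 as [H11 _]. unfold composable in *.
  assert (Hcc : cod s = cod t) by (rewrite dom_star in Hst; auto).
  assert (Hdd : dom s = dom t) by (revert H11; domcod).
  assert (Q1 : s^* ⋅ t = t^* ⋅ s).
  { rewrite <- (star_idem _ H1), star_mul, star_involutive by auto. reflexivity. }
  assert (Q2 : s ⋅ t^* = t ⋅ s^*).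
  { rewrite <- (star_idem _ H2), star_mul, star_involutive by domcod. reflexivity. }
  assert (Q : s ⋅ (s^* ⋅ t) = t ⋅ (s^* ⋅ s)).
  { rewrite Q1, <- mul_assoc, Q2 by domcod. apply mul_assoc; domcod. }
  exists (s ⋅ (s^* ⋅ t)). split.
  - apply nat_le_mul_idem; auto; domcod.
  - rewrite Q. apply nat_le_mul_idem; [apply idem_star_mul | domcod].
Qed.

Lemma quot_idem_ofE s : quot_idem_of S s <-> dom s = cod s /\ sigma (s ⋅ s) s.
Proof.
  unfold quot_idem_of, pi_sigma. split; intros [Hds Hq]; split; auto.
  - apply sigma_sym. rewrite <- Hq. apply sigma_refl.
  - apply functional_extensionality; intro t. apply propositional_extensionality.
    split; intro H.
    + apply sigma_trans with (s ⋅ s); auto. now apply sigma_sym.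
    + now apply sigma_trans with s.
Qed.

Lemma E_unitary_le :
  E_unitary S <-> forall s e, idem e -> nat_le e s -> idem s.
Proof.
  split.
  - intros Hi s e He Hle. exact (Hi s e (sigma_sym _ _ (sigma_of_le _ _ Hle)) He).
  - intros Hv s e [r [Hrs Hre]] He. apply (Hv s r); auto.
    now apply (nat_le_idem r e).
Qed.

Lemma E_unitary_pi : E_unitary S <-> pi_sigma_idempotent_pure S.
Proof.
  split.
  (* From s s ~ s, right multiplication by s^* gives s s s^* ~ s s^*,
     while s s s^* <= s. *)
  - intros Hi s Hs. apply quot_idem_ofE in Hs as [Hds Hss].
    assert (Hs' : sigma (s ⋅ (s ⋅ s^*)) (s ⋅ s^*)).
    { rewrite <- mul_assoc by domcod. now apply sigma_mulr; [| domcod]. }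
    apply (Hi s (s ⋅ s^*)); [| apply idem_mul_star].
    apply sigma_trans with (s ⋅ (s ⋅ s^*)); auto.
    apply sigma_sym, sigma_of_le, nat_le_mul_idem; [apply idem_mul_star | domcod].
  - intros Hii s e Hse He. pose proof He as [He1 He2]. unfold composable in He1.
    apply Hii, quot_idem_ofE.
    assert (Hds : dom s = cod s)
      by (rewrite (sigma_dom s e), (sigma_cod s e); auto).
    split; auto.
    apply sigma_trans with (e ⋅ e).
    + now apply sigma_mul.
    + rewrite He2. now apply sigma_sym.
Qed.

Lemma E_unitary_sigma_star :
  E_unitary S <-> forall s t, sigma s t ->
    (composable S s^* t /\ idem (s^* ⋅ t)) /\ (composable S s t^* /\ idem (s ⋅ t^*)).
Proof.
  split.
  - intros Hi s t Hst. unfold composable.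
    pose proof (sigma_dom s t Hst) as Hd. pose proof (sigma_cod s t Hst) as Hc.
    repeat split; try domcod.
    + apply (Hi _ (s^* ⋅ s)); [| apply idem_star_mul].
      apply sigma_sym, sigma_mull; [exact Hst | domcod].
    + apply (Hi _ (t ⋅ t^*)); [| apply idem_mul_star].
      apply sigma_mulr; [exact Hst | domcod].
  - intros Hiii s e Hse He. pose proof He as [He1 _]. unfold composable in He1.
    assert (Hs : sigma s (s^* ⋅ s)).
    { apply sigma_trans with e; auto.
      apply sigma_idem; [exact He | apply idem_star_mul |].
      rewrite <- (sigma_dom s e Hse). domcod. }
    destruct (Hiii _ _ Hs) as [_ [_ Hid]].
    now rewrite star_idem, mul_star_mul in Hid by apply idem_star_mul.
Qed.

End InverseSemigroupoid.

Theorem mainTheorem2 (S : inverse_semigroupoid) :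
  let star := star S in
  let E := idem S in
  let m := mul S in
  let i   := E_unitary S in
  let ii  := pi_sigma_idempotent_pure S in
  let iii := forall s t : arr S, sigma S s t ->
               (composable S (star s) t /\ E (m (star s) t)) /\
               (composable S s (star t) /\ E (m s (star t))) in
  let iv  := forall s t : arr S, sigma S s t <->
               ((composable S (star s) t /\ E (m (star s) t)) /\
                (composable S s (star t) /\ E (m s (star t)))) in
  let v   := forall s e : arr S, E e -> nat_le S e s -> E s in
  (i <-> ii) /\ (i <-> iii) /\ (i <-> iv) /\ (i <-> v).
Proof.
  cbv zeta.
  pose proof (E_unitary_sigma_star S) as Hiii.
  split; [apply E_unitary_pi |].
  split; [exact Hiii |].
  split; [| apply E_unitary_le].
  rewrite Hiii. split; intros H s t; [split |]; try apply H.
  intros [[Hst Hid] [_ Hid']]. now apply sigma_of_idem_star_mul.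
Qed.
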